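(* Let $p,q$ be positive integers, $z\in\mathbb{R}^p$, $w\in\mathbb{R}^q$, and let $e\in\mathbb{R}^p$ be the vector of all ones. Define $\psi:[0,+\infty)\to\mathbb{R}$ by $$\psi(\lambda):=-\lambda\|w\|+\left\langle e,\,[(\lambda+1)z-\|w\|e]^-\right\rangle,$$ and for $\lambda\ge0$ let $N(\lambda)$ be the $p\times p$ diagonal matrix $N(\lambda):=\operatorname{diag}\big(-\operatorname{sgn}([(\lambda+1)z-\|w\|e]^-)\big)$. Then $\psi$ is convex. Moreover, if $z^+\not\ge\|w\|e$ and $\langle z^-,e\rangle<\|w\|$, then: (1) for all $\lambda\ge0$, $-\|w\|+\langle e,N(\lambda)z\rangle\in\partial\psi(\lambda)$ and $-\|w\|+\langle e,N(\lambda)z\rangle<0$; (2) $\psi$ has a unique zero $\lambda_*>0$.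
   Context: For $\alpha\in\mathbb{R}$, $\alpha^+:=\max(\alpha,0)$ and $\alpha^-:=\max(-\alpha,0)$; for a vector $z\in\mathbb{R}^p$, $z^+$, $z^-$, $\operatorname{sgn}(z)$ are taken componentwise (with $\operatorname{sgn}(0)=0$), and $\operatorname{diag}(z)$ is the diagonal matrix with diagonal entries $z_1,\dots,z_p$. The order $\ge$ on vectors is componentwise, and $z^+\not\ge\|w\|e$ means that $z^+\ge\|w\|e$ fails. $\partial\psi(\lambda)$ denotes the subdifferential of the convex function $\psi$ at $\lambda$. *)

From HB Require Import structures.
From mathcomp Require Import all_boot all_order all_algebra.
From mathcomp Require Import reals.
Set Implicit Arguments. Unset Strict Implicit. Unset Printing Implicit Defensive.
Import Order.TTheory GRing.Theory Num.Theory.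
Local Open Scope ring_scope.

Section Defs.
Variable R : realType.

Definition pospart (a : R) : R := Num.max a 0.
Definition negpart (a : R) : R := Num.max (- a) 0.

Definition vpos n (z : 'cV[R]_n) : 'cV[R]_n := map_mx pospart z.
Definition vneg n (z : 'cV[R]_n) : 'cV[R]_n := map_mx negpart z.
Definition vsgn n (z : 'cV[R]_n) : 'cV[R]_n := map_mx (fun a => Num.sg a) z.

Definition ones n : 'cV[R]_n := const_mx 1.

Definition inner n (u v : 'cV[R]_n) : R := \sum_(i < n) u i 0 * v i 0.
Definition enorm n (w : 'cV[R]_n) : R := Num.sqrt (inner w w).

Definition vge n (u v : 'cV[R]_n) : Prop := forall i, v i 0 <= u i 0.

Definition psi p q (z : 'cV[R]_p) (w : 'cV[R]_q) (lam : R) : R :=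
  - lam * enorm w + inner (ones p) (vneg ((lam + 1) *: z - enorm w *: ones p)).

Definition Nmat p q (z : 'cV[R]_p) (w : 'cV[R]_q) (lam : R) : 'M[R]_p :=
  diag_mx (- vsgn (vneg ((lam + 1) *: z - enorm w *: ones p)))^T.

Definition convex_on (D : R -> Prop) (f : R -> R) : Prop :=
  forall x y t, D x -> D y -> 0 <= t -> t <= 1 ->
    f (t * x + (1 - t) * y) <= t * f x + (1 - t) * f y.

Definition subgrad (D : R -> Prop) (f : R -> R) (x g : R) : Prop :=
  forall y, D y -> f x + g * (y - x) <= f y.

End Defs.

Arguments ones {R} n.
Definition nonneg (R : realType) (x : R) : Prop := 0 <= x.

(* psi is the linear function -lam ||w|| plus the convex piecewise-linear
   functions lam |-> [(lam + 1) z_i - ||w||]^-, and - ||w|| + <e, N(lam) z>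
   sums one-sided slopes of these at lam, hence is a subgradient there; a
   function with a subgradient at every point of a convex domain is convex.
   Under the hypotheses that slope is at most -d := <z^-, e> - ||w|| < 0, so psi
   is strictly decreasing.  Some z_i^+ < ||w|| gives psi 0 > 0, while the
   subgradient inequality at psi 0 / d, tested at 0, gives psi (psi 0 / d) <= 0;
   the intermediate value theorem provides the zero. *)

From HB Require Import structures.
From mathcomp Require Import all_boot all_order all_algebra.
From mathcomp Require Import reals ring lra.
From mathcomp Require Import boolp topology normedtype.
Set Implicit Arguments.
Unset Strict Implicit.
Unset Printing Implicit Defensive.

Import Order.TTheory GRing.Theory Num.Theory.
Import numFieldNormedType.Exports.
Local Open Scope ring_scope.

Section NegPart.
Context {R : realType}.
Implicit Types x y : R.

Lemma negpart_ge0 x : 0 <= negpart x.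
Proof. by rewrite /negpart le_max lexx orbT. Qed.

Lemma oppr_le_negpart x : - x <= negpart x.
Proof. by rewrite /negpart le_max lexx. Qed.

Lemma ler0_negpart x : x <= 0 -> negpart x = - x.
Proof. by move=> x_le0; rewrite /negpart max_l // oppr_ge0. Qed.

Lemma ger0_negpart x : 0 <= x -> negpart x = 0.
Proof. by move=> x_ge0; rewrite /negpart max_r // oppr_le0. Qed.

Lemma sgr_negpart x : Num.sg (negpart x) = if x < 0 then 1 else 0.
Proof.
have [x_lt0|x_ge0] := ltP x 0; last by rewrite ger0_negpart ?sgr0.
by rewrite (ler0_negpart (ltW x_lt0)) gtr0_sg // oppr_gt0.
Qed.

Lemma negpart_subgrad x y :
  negpart x + (if x < 0 then -1 else 0) * (y - x) <= negpart y.
Proof.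
have [x_lt0|x_ge0] := ltP x 0.
  by rewrite (ler0_negpart (ltW x_lt0)) mulN1r -opprD addrC subrK oppr_le_negpart.
by rewrite ger0_negpart // mul0r addr0 negpart_ge0.
Qed.

Lemma continuous_negpart : continuous (@negpart R).
Proof.
move=> x; apply: (@continuous_max _ _ -%R (fun _ => 0)).
  exact: continuousN (@cvg_id _ _).
exact: cst_continuous.
Qed.

End NegPart.

Section Subgradients.
Variables (R : realType) (D : R -> Prop) (f g : R -> R).
Hypothesis f_subgrad : forall x, D x -> subgrad D f x (g x).

Lemma convex_on_subgrad :
  (forall x y t, D x -> D y -> 0 <= t -> t <= 1 -> D (t * x + (1 - t) * y)) ->
  convex_on D f.
Proof.
move=> D_convex x y t Dx Dy t_ge0 t_le1; set m := t * x + (1 - t) * y.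
have Dm : D m by exact: D_convex.
have t'_ge0 : 0 <= 1 - t by rewrite subr_ge0.
have := lerD (ler_wpM2l t_ge0 (f_subgrad Dm Dx)) (ler_wpM2l t'_ge0 (f_subgrad Dm Dy)).
have barycenter : t * (x - m) + (1 - t) * (y - m) = 0 by rewrite /m; ring.
congr (_ <= _); transitivity (f m + g m * (t * (x - m) + (1 - t) * (y - m))).
  by ring.
by rewrite barycenter mulr0 addr0.
Qed.

End Subgradients.

Section DecreasingRoot.
Variables (R : realType) (f g : R -> R) (d : R).
Hypotheses (f_cont : continuous f) (f0_gt0 : 0 < f 0) (d_gt0 : 0 < d).
Hypothesis f_subgrad : forall x, 0 <= x -> subgrad (@nonneg R) f x (g x).
Hypothesis g_le : forall x, 0 <= x -> g x <= - d.

Lemma subgrad_lt0_decreasing x y : 0 <= x -> x < y -> f y < f x.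
Proof.
move=> x_ge0 lt_xy; have y_ge0 : 0 <= y := le_trans x_ge0 (ltW lt_xy).
apply: lt_le_trans (f_subgrad y_ge0 x_ge0).
rewrite ltrDl nmulr_lgt0 ?subr_lt0 //.
by apply: le_lt_trans (g_le y_ge0) _; rewrite oppr_lt0.
Qed.

Lemma subgrad_le0_at_ratio : f (f 0 / d) <= 0.
Proof.
set L := f 0 / d; have L_ge0 : 0 <= L by rewrite divr_ge0 ?ltW.
have dL : d * L = f 0 by rewrite /L mulrC divfK ?gt_eqF.
have := f_subgrad L_ge0 (lexx 0); have := ler_wpM2r L_ge0 (g_le L_ge0).
rewrite mulNr dL; lra.
Qed.

Lemma exists_unique_pos_root :
  exists r, 0 < r /\ f r = 0 /\ forall mu, 0 <= mu -> f mu = 0 -> mu = r.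
Proof.
have L_ge0 : 0 <= f 0 / d by rewrite divr_ge0 ?ltW.
have [r] : exists2 r, r \in `[0, f 0 / d] & f r = 0.
  apply: IVT => //; first by apply: continuous_subspaceT => x; apply: f_cont.
  by rewrite ge_min le_max subgrad_le0_at_ratio orbT (ltW f0_gt0).
rewrite in_itv /= => /andP[r_ge0 _] fr0.
have r_gt0 : 0 < r.
  rewrite lt_neqAle r_ge0 andbT; apply: contraTneq f0_gt0 => r0.
  by rewrite -r0 in fr0; rewrite fr0 ltxx.
exists r; split; [done | split=> // mu mu_ge0 fmu0].
have [lt_mur|lt_rmu|//] := ltgtP mu r.
- by have := subgrad_lt0_decreasing mu_ge0 lt_mur; rewrite fr0 fmu0 ltxx.
- by have := subgrad_lt0_decreasing r_ge0 lt_rmu; rewrite fr0 fmu0 ltxx.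
Qed.

End DecreasingRoot.

Section Psi.
Variables (R : realType) (p q : nat) (z : 'cV[R]_p) (w : 'cV[R]_q).
Let W := enorm w.
Let slack (lam : R) (i : 'I_p) := (lam + 1) * z i 0 - W.

Lemma psiE lam : psi z w lam = - lam * W + \sum_i negpart (slack lam i).
Proof.
congr (_ + _); apply: eq_bigr => i _.
by rewrite !mxE mul1r mulr1.
Qed.

Lemma psi_slopeE lam : - W + inner (ones p) (Nmat z w lam *m z) =
  - W + \sum_i (if slack lam i < 0 then -1 else 0) * z i 0.
Proof.
congr (_ + _); apply: eq_bigr => i _.
by rewrite mul_diag_mx !mxE mul1r mulr1 sgr_negpart; case: ifP; rewrite ?oppr0.
Qed.

Lemma psi_subgrad lam :
  subgrad (@nonneg R) (psi z w) lam (- W + inner (ones p) (Nmat z w lam *m z)).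
Proof.
move=> y _; rewrite !psiE psi_slopeE mulrDl mulr_suml addrACA.
have -> : - lam * W + - W * (y - lam) = - y * W by ring.
rewrite lerD2l -big_split /=; apply: ler_sum => i _.
have -> : slack y i = slack lam i + z i 0 * (y - lam) by rewrite /slack; ring.
have := negpart_subgrad (slack lam i) (slack lam i + z i 0 * (y - lam)).
by rewrite [_ + _ - _]addrC addKr mulrA.
Qed.

Lemma psi_slope_le lam :
  - W + inner (ones p) (Nmat z w lam *m z) <= inner (vneg z) (ones p) - W.
Proof.
rewrite psi_slopeE addrC lerD2r; apply: ler_sum => i _.
rewrite !mxE mulr1; case: ifP => _; first by rewrite mulN1r oppr_le_negpart.
by rewrite mul0r negpart_ge0.
Qed.

Lemma psi0_gt0 : ~ vge (vpos z) (W *: ones p) -> 0 < psi z w 0.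
Proof.
move=> z_not_ge; rewrite psiE mulNr mul0r oppr0 add0r.
have [i zi_lt | z_ge] := pickP (fun i => pospart (z i 0) < W); last first.
  by exfalso; apply: z_not_ge => i; rewrite !mxE mulr1 leNgt z_ge.
rewrite (bigD1 i) //= ltr_pwDl ?sumr_ge0 // => [|j _]; last exact: negpart_ge0.
apply: lt_le_trans (oppr_le_negpart _); rewrite /slack add0r mul1r opprB subr_gt0.
by apply: le_lt_trans zi_lt; rewrite /pospart le_max lexx.
Qed.

Lemma continuous_psi : continuous (psi z w).
Proof.
rewrite (funext psiE) => x; apply: cvgD.
  by apply: cvgM; [exact: cvgN | exact: cvg_cst].
apply: (continuous_big add_continuous) => i _ {}x.
have slack_cont : {for x, continuous (slack^~ i)}.
  apply: cvgB; last exact: cvg_cst.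
  apply: cvgM; last exact: cvg_cst.
  by apply: cvgD; [exact: cvg_id | exact: cvg_cst].
exact: continuous_comp slack_cont (@continuous_negpart R _).
Qed.

End Psi.

Theorem proposition2 (R : realType) (p q : nat) (hp : (0 < p)%N) (hq : (0 < q)%N)
    (z : 'cV[R]_p) (w : 'cV[R]_q) :
  convex_on (@nonneg R) (psi z w) /\
  (~ vge (vpos z) (enorm w *: ones p) ->
   inner (vneg z) (ones p) < enorm w ->
   (forall lam : R, 0 <= lam ->
      subgrad (@nonneg R) (psi z w) lam
        (- enorm w + inner (ones p) (Nmat z w lam *m z)) /\
      - enorm w + inner (ones p) (Nmat z w lam *m z) < 0) /\
   (exists lamstar : R, 0 < lamstar /\ psi z w lamstar = 0 /\
      forall mu : R, 0 <= mu -> psi z w mu = 0 -> mu = lamstar)).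
Proof.
have psi_subgrad_nonneg lam : nonneg lam ->
    subgrad (@nonneg R) (psi z w) lam (- enorm w + inner (ones p) (Nmat z w lam *m z)).
  by move=> _; exact: psi_subgrad.
split.
  apply: (convex_on_subgrad psi_subgrad_nonneg) => x y t x_ge0 y_ge0 t_ge0 t_le1.
  by rewrite /nonneg addr_ge0 // mulr_ge0 // subr_ge0.
move=> z_not_ge z_neg_lt; set d := enorm w - inner (vneg z) (ones p).
have d_gt0 : 0 < d by rewrite subr_gt0.
have slope_le lam : 0 <= lam ->
    - enorm w + inner (ones p) (Nmat z w lam *m z) <= - d.
  by move=> _; rewrite opprB psi_slope_le.
split.
  move=> lam lam_ge0; split; first exact: psi_subgrad.
  by apply: le_lt_trans (slope_le lam lam_ge0) _; rewrite oppr_lt0.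
apply: (exists_unique_pos_root _ (psi0_gt0 z_not_ge) d_gt0 psi_subgrad_nonneg slope_le).
exact: continuous_psi.
Qed.
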